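(* In the two-source game ($m=2$) with $n_1\ge n_2$, if the pure strategy profile in which all users choose the direct path ($u_1=n_1$, $u_2=n_2$) is optimal (maximizes $TR$), then it is also a Nash equilibrium.
   Context: Two-source network: sources $s_1,s_2$ and destination $d$; source $s_i$ has a set $N_i$ of $n_i$ users. Each user generates an independent Poisson flow of packets of rate $\phi>0$; each direct link $(s_i,d)$ has service rate $\mu>0$; the sidelink between $s_1$ and $s_2$ loses packets independently with probability $q\in[0,1]$, and $\bar q=1-q$. Only pure strategies: a user of $N_1$ chooses DP $(s_1,d)$ or IP $(s_1,s_2,d)$; a user of $N_2$ chooses DP $(s_2,d)$ or IP $(s_2,s_1,d)$. With $u_i$ users of $N_i$ on DP, $T_1=u_1\phi+(n_2-u_2)\bar q\phi$, $T_2=u_2\phi+(n_1-u_1)\bar q\phi$ and $TR=\sum_i\frac{\mu T_i}{T_i+\mu}$. The loss rate of a user of $N_i$ is $\phi\frac{T_i}{T_i+\mu}$ on DP and $\phi\left(q+\bar q\frac{T_j}{T_j+\mu}\right)$ on IP to $s_j$. A Nash equilibrium is a pure profile in which no user can strictly decrease its loss rate by unilaterally switching its route. *)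

From Stdlib Require Import Reals Lra Lia.
Open Scope R_scope.

(* A pure profile is described (users within a class
   being identical) by u1 = number of users of N_1 on DP, u2 = number of
   users of N_2 on DP, with 0 <= u_i <= n_i.  The remaining n_i - u_i users
   of N_i use IP. *)

Definition T1 (phi q : R) (n1 n2 u1 u2 : nat) : R :=
  INR u1 * phi + INR (n2 - u2) * (1 - q) * phi.
Definition T2 (phi q : R) (n1 n2 u1 u2 : nat) : R :=
  INR u2 * phi + INR (n1 - u1) * (1 - q) * phi.

Definition TR (phi mu q : R) (n1 n2 u1 u2 : nat) : R :=
  mu * T1 phi q n1 n2 u1 u2 / (T1 phi q n1 n2 u1 u2 + mu)
  + mu * T2 phi q n1 n2 u1 u2 / (T2 phi q n1 n2 u1 u2 + mu).

Definition loss1_DP phi mu q n1 n2 u1 u2 : R :=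
  phi * (T1 phi q n1 n2 u1 u2 / (T1 phi q n1 n2 u1 u2 + mu)).
Definition loss1_IP phi mu q n1 n2 u1 u2 : R :=
  phi * (q + (1 - q) * (T2 phi q n1 n2 u1 u2 / (T2 phi q n1 n2 u1 u2 + mu))).
Definition loss2_DP phi mu q n1 n2 u1 u2 : R :=
  phi * (T2 phi q n1 n2 u1 u2 / (T2 phi q n1 n2 u1 u2 + mu)).
Definition loss2_IP phi mu q n1 n2 u1 u2 : R :=
  phi * (q + (1 - q) * (T1 phi q n1 n2 u1 u2 / (T1 phi q n1 n2 u1 u2 + mu))).

Definition admissible (n1 n2 u1 u2 : nat) : Prop := (u1 <= n1)%nat /\ (u2 <= n2)%nat.

(* Pure Nash equilibrium: no user can strictly decrease its loss rate by a
   unilateral switch (the deviation changes the profile by one user). *)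
Definition nash (phi mu q : R) (n1 n2 u1 u2 : nat) : Prop :=
  admissible n1 n2 u1 u2 /\
  ((0 < u1)%nat -> ~ (loss1_IP phi mu q n1 n2 (u1 - 1) u2 < loss1_DP phi mu q n1 n2 u1 u2)) /\
  ((u1 < n1)%nat -> ~ (loss1_DP phi mu q n1 n2 (u1 + 1) u2 < loss1_IP phi mu q n1 n2 u1 u2)) /\
  ((0 < u2)%nat -> ~ (loss2_IP phi mu q n1 n2 u1 (u2 - 1) < loss2_DP phi mu q n1 n2 u1 u2)) /\
  ((u2 < n2)%nat -> ~ (loss2_DP phi mu q n1 n2 u1 (u2 + 1) < loss2_IP phi mu q n1 n2 u1 u2)).

Definition optimal (phi mu q : R) (n1 n2 u1 u2 : nat) : Prop :=
  admissible n1 n2 u1 u2 /\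
  forall v1 v2, admissible n1 n2 v1 v2 -> TR phi mu q n1 n2 v1 v2 <= TR phi mu q n1 n2 u1 u2.

(** A user of [N_2] never gains by leaving DP: as [n2 <= n1], its IP load
    is at least its DP load, and IP adds the sidelink loss on top.
    For a user of [N_1], IP is no better than DP as soon as
    [(1-q) (T_1 + mu) <= T_2' + mu], with [T_1 = n1 phi] its DP load and
    [T_2' = n2 phi + (1-q) phi] its IP load.  If [n2 = n1] this holds outright.
    If [n2 < n1], optimality says that moving the user to IP loses at [s_1] at
    least the throughput it adds at [s_2]; since the marginal throughput
    [mu^2 / ((T + mu) (T + delta + mu))] decreases in the load [T] and [s_2]
    is the less loaded source, this yields the inequality above. *)

From Stdlib Require Import Reals Lra Lia.
Open Scope R_scope.

Section Blocking.

Variable mu : R.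
Hypothesis mu_gt0 : 0 < mu.

Lemma blocking_le1 (y : R) : 0 <= y -> y / (y + mu) <= 1.
Proof.
  intros y_ge0.
  apply (Rmult_le_reg_r (y + mu)); [lra|].
  field_simplify; lra.
Qed.

Lemma blocking_le (y z : R) : 0 <= y <= z -> y / (y + mu) <= z / (z + mu).
Proof.
  intros Hyz.
  assert (E : z / (z + mu) - y / (y + mu) = mu * (z - y) / ((z + mu) * (y + mu)))
    by (field; lra).
  assert (0 <= mu * (z - y) / ((z + mu) * (y + mu))).
  { apply Rmult_le_pos; [nra|].
    apply Rlt_le, Rinv_0_lt_compat; nra. }
  lra.
Qed.

Lemma blocking_le_lossy (q y z : R) : q <= 1 -> 0 <= y -> 0 <= z ->
  (1 - q) * (y + mu) <= z + mu ->
  y / (y + mu) <= q + (1 - q) * (z / (z + mu)).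
Proof.
  intros q_le1 y_ge0 z_ge0 Hyz.
  assert (E : q + (1 - q) * (z / (z + mu)) - y / (y + mu)
              = mu * ((z + mu) - (1 - q) * (y + mu)) / ((y + mu) * (z + mu)))
    by (field; lra).
  assert (0 <= mu * ((z + mu) - (1 - q) * (y + mu)) / ((y + mu) * (z + mu))).
  { apply Rmult_le_pos; [nra|].
    apply Rlt_le, Rinv_0_lt_compat; nra. }
  lra.
Qed.

Lemma throughput_gain (y z : R) : 0 <= y -> 0 <= z ->
  mu * z / (z + mu) - mu * y / (y + mu) = mu * mu * (z - y) / ((y + mu) * (z + mu)).
Proof. intros; field; lra. Qed.

Lemma throughput_exchange (x b c d : R) :
  0 <= x -> 0 <= b -> 0 <= c -> 0 <= d -> b <= x ->
  mu * x / (x + mu) + mu * (b + c) / (b + c + mu)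
    <= mu * (x + d) / (x + d + mu) + mu * b / (b + mu) ->
  c * (x + d + mu) <= d * (b + c + mu).
Proof.
  intros x_ge0 b_ge0 c_ge0 d_ge0 b_le_x Hexch.
  assert (Hgain : mu * mu * c / ((b + mu) * (b + c + mu))
                  <= mu * mu * d / ((x + mu) * (x + d + mu))).
  { pose proof (throughput_gain b (b + c) ltac:(lra) ltac:(lra)) as Gb.
    pose proof (throughput_gain x (x + d) ltac:(lra) ltac:(lra)) as Gx.
    replace (b + c - b) with c in Gb by ring.
    replace (x + d - x) with d in Gx by ring.
    lra. }
  assert (Hcross : c * ((x + mu) * (x + d + mu)) <= d * ((b + mu) * (b + c + mu))).
  { set (P := (b + mu) * (b + c + mu)) in *.
    set (Q := (x + mu) * (x + d + mu)) in *.
    assert (P_gt0 : 0 < P) by (unfold P; nra).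
    assert (Q_gt0 : 0 < Q) by (unfold Q; nra).
    apply Rmult_le_compat_r with (r := P * Q) in Hgain; [|nra].
    replace (mu * mu * c / P * (P * Q)) with (mu * mu * (c * Q)) in Hgain by (field; lra).
    replace (mu * mu * d / Q * (P * Q)) with (mu * mu * (d * P)) in Hgain by (field; lra).
    apply (Rmult_le_reg_l (mu * mu)); nra. }
  assert (d * ((b + mu) * (b + c + mu)) <= d * ((x + mu) * (b + c + mu))).
  { apply Rmult_le_compat_l; [lra|].
    apply Rmult_le_compat_r; lra. }
  apply (Rmult_le_reg_l (x + mu)); lra.
Qed.

End Blocking.

Section AllDirect.

Variables (phi mu q : R) (n1 n2 : nat).
Hypotheses (phi_gt0 : 0 < phi) (mu_gt0 : 0 < mu) (q_bound : 0 <= q <= 1).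
Hypothesis n2_le_n1 : (n2 <= n1)%nat.

Lemma T1_N2_direct (u1 : nat) : T1 phi q n1 n2 u1 n2 = INR u1 * phi.
Proof. unfold T1; rewrite Nat.sub_diag; simpl; ring. Qed.

Lemma T2_N1_direct (u2 : nat) : T2 phi q n1 n2 n1 u2 = INR u2 * phi.
Proof. unfold T2; rewrite Nat.sub_diag; simpl; ring. Qed.

Lemma T1_one_N2_indirect : (0 < n2)%nat ->
  T1 phi q n1 n2 n1 (n2 - 1) = INR n1 * phi + (1 - q) * phi.
Proof.
  intros n2_gt0; unfold T1.
  replace (n2 - (n2 - 1))%nat with 1%nat by lia.
  simpl; ring.
Qed.

Lemma T2_one_N1_indirect : (0 < n1)%nat ->
  T2 phi q n1 n2 (n1 - 1) n2 = INR n2 * phi + (1 - q) * phi.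
Proof.
  intros n1_gt0; unfold T2.
  replace (n1 - (n1 - 1))%nat with 1%nat by lia.
  simpl; ring.
Qed.

Lemma loss2_DP_le_IP : (0 < n2)%nat ->
  loss2_DP phi mu q n1 n2 n1 n2 <= loss2_IP phi mu q n1 n2 n1 (n2 - 1).
Proof.
  intros n2_gt0; unfold loss2_DP, loss2_IP.
  rewrite T2_N1_direct, T1_one_N2_indirect by exact n2_gt0.
  apply Rmult_le_compat_l; [lra|].
  set (z := INR n1 * phi + (1 - q) * phi).
  assert (INR n2 <= INR n1) by (apply le_INR; exact n2_le_n1).
  assert (0 <= INR n2) by apply pos_INR.
  assert (DP_le : INR n2 * phi / (INR n2 * phi + mu) <= z / (z + mu)).
  { apply blocking_le; [exact mu_gt0|]; unfold z; nra. }
  assert (z / (z + mu) <= 1) by (apply blocking_le1; unfold z; nra).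
  nra.
Qed.

Lemma loss1_DP_le_IP : (0 < n1)%nat ->
  TR phi mu q n1 n2 (n1 - 1) n2 <= TR phi mu q n1 n2 n1 n2 ->
  loss1_DP phi mu q n1 n2 n1 n2 <= loss1_IP phi mu q n1 n2 (n1 - 1) n2.
Proof.
  intros n1_gt0 Hopt; unfold TR, loss1_DP, loss1_IP in *.
  rewrite T1_N2_direct, T2_N1_direct, T2_one_N1_indirect in * by exact n1_gt0.
  rewrite T1_N2_direct in Hopt.
  set (x := INR (n1 - 1) * phi) in Hopt.
  set (b := INR n2 * phi) in *.
  assert (n1_phi : INR n1 * phi = x + phi).
  { assert (n1_succ : INR n1 = INR (n1 - 1) + 1) by (rewrite <- S_INR; f_equal; lia).
    unfold x; rewrite n1_succ; ring. }
  rewrite n1_phi in *.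
  assert (x_ge0 : 0 <= x) by (unfold x; apply Rmult_le_pos; [apply pos_INR|lra]).
  assert (b_ge0 : 0 <= b) by (unfold b; apply Rmult_le_pos; [apply pos_INR|lra]).
  apply Rmult_le_compat_l; [lra|].
  apply blocking_le_lossy; [exact mu_gt0|lra|lra|nra|].
  destruct (Nat.eq_dec n2 n1) as [n2_eq_n1|n2_ne_n1].
  - assert (b_eq : b = x + phi) by (unfold b; rewrite n2_eq_n1; exact n1_phi).
    rewrite b_eq; nra.
  - assert (b_le_x : b <= x).
    { unfold x, b; apply Rmult_le_compat_r; [lra|]. apply le_INR; lia. }
    apply (Rmult_le_reg_l phi); [exact phi_gt0|].
    replace (phi * ((1 - q) * (x + phi + mu))) with ((1 - q) * phi * (x + phi + mu)) by ring.
    apply (throughput_exchange mu mu_gt0 x b); [lra|lra|nra|lra|exact b_le_x|exact Hopt].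
Qed.

End AllDirect.

Theorem corollary2 (phi mu q : R) (n1 n2 : nat) :
  0 < phi -> 0 < mu -> 0 <= q <= 1 -> (n2 <= n1)%nat ->
  optimal phi mu q n1 n2 n1 n2 -> nash phi mu q n1 n2 n1 n2.
Proof.
  intros phi_gt0 mu_gt0 q_bound n2_le_n1 [adm_all_DP all_DP_max].
  split; [exact adm_all_DP|].
  split; [|split; [|split]]; intros Hdev; try lia; apply Rle_not_lt.
  - apply loss1_DP_le_IP; try assumption.
    apply all_DP_max; split; lia.
  - apply loss2_DP_le_IP; assumption.
Qed.
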